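(* Let $L,K,M$ be positive integers, $0<\tau_p<\tau_c$, $\beta_{i,k}>0$, $p_k>0$, $\sigma_{\mathrm{UL}}^2>0$, $\sigma_{\mathrm{DL}}^2>0$, $P_{\max,i}>0$, and $\xi_k>0$, with $\hat\xi_k=2^{\xi_k\tau_c/(\tau_c-\tau_p)}-1$. Define $c_{i,k}=\beta_{i,k}$ and $b_{i,t}=\frac{Mp_t\tau_p\beta_{i,t}^2}{\hat\xi_t(p_t\tau_p\beta_{i,t}+\sigma_{\mathrm{UL}}^2)}$, and consider the linear program in the variables $\rho_{i,t}\ge0$ ($i=1,\dots,L$, $t=1,\dots,K$): $$\min\ \sum_{t=1}^K\sum_{i=1}^L\rho_{i,t}\quad\text{s.t.}\quad \sum_{t=1}^K\sum_{i=1}^L c_{i,k}\rho_{i,t}-\sum_{i=1}^L b_{i,k}\rho_{i,k}+\sigma_{\mathrm{DL}}^2\le0\ \ \forall k,\qquad \sum_{t=1}^K\rho_{i,t}\le P_{\max,i}\ \ \forall i,$$ with Lagrangian $\mathcal{L}=\sum_{t,i}\rho_{i,t}+\sum_{k}\lambda_k\big(\sum_{t,i}c_{i,k}\rho_{i,t}-\sum_i b_{i,k}\rho_{i,k}+\sigma_{\mathrm{DL}}^2\big)+\sum_i\mu_i\big(\sum_t\rho_{i,t}-P_{\max,i}\big)$, $\lambda_k\ge0$, $\mu_i\ge0$. Assume the program is feasible, let $\{\check\rho_{i,t}\}$ be an optimal solution and $\{\check\lambda_k,\check\mu_i\}$ optimal Lagrange multipliers. Then each user $t$ is served only by base stations with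 indices in $$\mathcal{S}_t=\underset{i\in\{1,\dots,L\}}{\mathrm{argmin}}\ \left(1+\sum_{k=1}^K\check\lambda_kc_{i,k}+\check\mu_i\right)\frac{1}{b_{i,t}},$$ i.e., $\check\rho_{i,t}>0$ implies $i\in\mathcal{S}_t$. In particular, user $t$ is served by one base station if $\mathcal{S}_t$ contains only one index, and by a subset of base stations (contained in $\mathcal{S}_t$) if $\mathcal{S}_t$ contains several indices.
   Context: The linear program is the total downlink transmit power minimization for a Massive MIMO system with $L$ base stations (BSs) of $M$ antennas, $K$ single-antenna users, MRT precoding and non-coherent joint transmission; $\rho_{i,t}$ is the power BS $i$ allocates to user $t$, and user $t$ is associated with (served by) BS $i$ if and only if $\rho_{i,t}\ne0$. The first constraint family encodes that user $k$'s spectral efficiency is at least $\xi_k$, the second the per-BS peak power $P_{\max,i}$. *)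

From HB Require Import structures.
From mathcomp Require Import all_boot all_order all_algebra.
From mathcomp Require Import reals exp.
Set Implicit Arguments. Unset Strict Implicit. Unset Printing Implicit Defensive.
Import Order.TTheory GRing.Theory Num.Theory.
Local Open Scope ring_scope.

Section LPDefs.
Variables (R : realType) (L K : nat).

Definition xihat (tau_c tau_p : R) (xi : 'I_K -> R) (k : 'I_K) : R :=
  powR 2 (xi k * tau_c / (tau_c - tau_p)) - 1.

Definition ccoef (beta : 'I_L -> 'I_K -> R) (i : 'I_L) (k : 'I_K) : R := beta i k.

Definition bcoef (M : nat) (tau_c tau_p sigUL2 : R) (p : 'I_K -> R)
  (beta : 'I_L -> 'I_K -> R) (xi : 'I_K -> R) (i : 'I_L) (t : 'I_K) : R :=
  M%:R * p t * tau_p * beta i t ^+ 2 /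
  (xihat tau_c tau_p xi t * (p t * tau_p * beta i t + sigUL2)).

Variables (c b : 'I_L -> 'I_K -> R) (sigDL2 : R) (Pmax : 'I_L -> R).

Definition objective (rho : 'I_L -> 'I_K -> R) : R :=
  \sum_(t < K) \sum_(i < L) rho i t.

Definition se_constr (rho : 'I_L -> 'I_K -> R) (k : 'I_K) : R :=
  \sum_(t < K) \sum_(i < L) c i k * rho i t - \sum_(i < L) b i k * rho i k + sigDL2.

Definition pow_constr (rho : 'I_L -> 'I_K -> R) (i : 'I_L) : R :=
  \sum_(t < K) rho i t - Pmax i.

Definition nonneg (rho : 'I_L -> 'I_K -> R) : Prop := forall i t, 0 <= rho i t.

Definition feasible (rho : 'I_L -> 'I_K -> R) : Prop :=
  [/\ nonneg rho, (forall k, se_constr rho k <= 0) & (forall i, pow_constr rho i <= 0)].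

Definition optimal (rho : 'I_L -> 'I_K -> R) : Prop :=
  feasible rho /\ forall rho', feasible rho' -> objective rho <= objective rho'.

(* The Lagrangian (the constraint rho >= 0 is kept as the domain). *)
Definition lagrangian (rho : 'I_L -> 'I_K -> R) (lam : 'I_K -> R) (mu : 'I_L -> R) : R :=
  objective rho + \sum_(k < K) lam k * se_constr rho k
                + \sum_(i < L) mu i * pow_constr rho i.

(* d is a lower bound of the dual function g(lam,mu) = inf_{rho >= 0} L(rho,lam,mu) *)
Definition dual_lb (lam : 'I_K -> R) (mu : 'I_L -> R) (d : R) : Prop :=
  forall rho, nonneg rho -> d <= lagrangian rho lam mu.

(* (lam, mu) are optimal Lagrange multipliers: they are nonnegative and maximize
   the dual function g, i.e. g(lam',mu') <= g(lam,mu) (in the extended reals)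
   for all nonnegative (lam', mu'); expressed through lower bounds so that no
   infimum is needed: every lower bound of L(.,lam',mu') is one of L(.,lam,mu). *)
Definition dual_optimal (lam : 'I_K -> R) (mu : 'I_L -> R) : Prop :=
  [/\ (forall k, 0 <= lam k), (forall i, 0 <= mu i) &
      forall (lam' : 'I_K -> R) (mu' : 'I_L -> R),
        (forall k, 0 <= lam' k) -> (forall i, 0 <= mu' i) ->
        forall d, dual_lb lam' mu' d -> dual_lb lam mu d].

Definition serving_cost (lam : 'I_K -> R) (mu : 'I_L -> R) (i : 'I_L) (t : 'I_K) : R :=
  (1 + \sum_(k < K) lam k * c i k + mu i) / b i t.

Definition Sset (lam : 'I_K -> R) (mu : 'I_L -> R) (t : 'I_K) : {set 'I_L} :=
  [set i | [forall j, serving_cost lam mu i t <= serving_cost lam mu j t]].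

End LPDefs.

From HB Require Import structures.
From mathcomp Require Import all_boot all_order all_algebra.
From mathcomp Require Import reals exp.
From mathcomp Require Import ring lra.
Import Order.TTheory GRing.Theory Num.Theory.
Local Open Scope ring_scope.

(* By LP strong duality (obtained from Farkas' lemma on the homogenized
   program) some nonnegative multipliers make the optimal value a lower bound
   of the Lagrangian on rho >= 0; dual optimality transfers this bound to the
   given multipliers (lam, mu).  As the Lagrangian never exceeds the objective
   at the feasible optimum, the optimal rho minimizes the Lagrangian over the
   orthant.  The Lagrangian is affine in rho, the coefficient of rho_{i,t}
   being (1 + sum_k lam_k c_{i,k} + mu_i) - lam_t b_{i,t}; minimality over the
   orthant forces every coefficient to be nonnegative and to vanish where
   rho_{i,t} > 0.  Dividing by b_{i,t} > 0, the serving cost of BS i for user t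
   is at least lam_t, with equality on the support of rho. *)

Definition dot {R : comPzRingType} {T : finType} (u v : T -> R) : R :=
  \sum_t u t * v t.

Section Dot.
Context {R : comPzRingType} {T : finType}.
Implicit Types (u v w x : T -> R) (r : R).

Lemma dotC u v : dot u v = dot v u.
Proof. by apply: eq_bigr => t _; rewrite mulrC. Qed.

Lemma dotDr u v w : dot u (fun t => v t + w t) = dot u v + dot u w.
Proof. by rewrite /dot -big_split; apply: eq_bigr => t _; rewrite mulrDr. Qed.

Lemma dotZr u v r : dot u (fun t => r * v t) = r * dot u v.
Proof. by rewrite /dot mulr_sumr; apply: eq_bigr => t _; rewrite mulrCA. Qed.

Lemma dotBr u v w : dot u (fun t => v t - w t) = dot u v - dot u w.
Proof. by rewrite /dot -sumrB; apply: eq_bigr => t _; rewrite mulrBr. Qed.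

Lemma dot_suml (I : Type) (s : seq I) (y : I -> R) (a : I -> T -> R) x :
  dot (fun t => \sum_(j <- s) y j * a j t) x = \sum_(j <- s) y j * dot (a j) x.
Proof.
rewrite /dot; under eq_bigr do rewrite mulr_suml.
rewrite exchange_big; apply: eq_bigr => j _; rewrite mulr_sumr.
by apply: eq_bigr => t _; rewrite mulrA.
Qed.

Lemma dot_sumlE {I : Type} {s : seq I} {y : I -> R} {a : I -> T -> R} {u} x :
  (forall t, u t = \sum_(j <- s) y j * a j t) ->
  dot u x = \sum_(j <- s) y j * dot (a j) x.
Proof. by move=> u_eq; rewrite -dot_suml; apply: eq_bigr => t _; rewrite u_eq. Qed.

Lemma sum_delta (q : T) (F : T -> R) : \sum_t (t == q)%:R * F t = F q.
Proof.
rewrite (bigD1 q) //= eqxx mul1r big1 ?addr0 // => t /negbTE ->.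
by rewrite mul0r.
Qed.

Lemma dot_deltar u (q : T) : dot u (fun t => (t == q)%:R) = u q.
Proof. by rewrite dotC; apply: sum_delta. Qed.

Lemma dot0l v : dot (fun=> 0) v = 0.
Proof. by rewrite /dot big1 // => t _; rewrite mul0r. Qed.

Lemma dotNl u v : dot (fun t => - u t) v = - dot u v.
Proof. by rewrite /dot -sumrN; apply: eq_bigr => t _; rewrite mulNr. Qed.

Definition homog u r : T + unit -> R :=
  fun o => if o is inl t then u t else r.

Lemma dot_homogl u r (z : T + unit -> R) :
  dot (homog u r) z = dot u (fun t => z (inl t)) + r * z (inr tt).
Proof. by rewrite /dot big_sumType /= (big_pred1 tt) // => -[]. Qed.

Lemma dot_homog u r v s : dot (homog u r) (homog v s) = dot u v + r * s.
Proof. exact: dot_homogl. Qed.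

End Dot.

Section Farkas.
Context {R : realFieldType} {T : finType}.
Implicit Types (u x : T -> R).

Lemma dot_self_gt0 u : (exists t, u t != 0) -> 0 < dot u u.
Proof.
move=> [t ut_neq0]; rewrite /dot (bigD1 t) //= ltr_pwDl ?sumr_ge0 //.
  by rewrite -expr2 exprn_even_gt0.
by move=> s _; rewrite -expr2 sqr_ge0.
Qed.

Definition in_cone {I : eqType} (s : seq I) (a : I -> T -> R) (c : T -> R) :=
  exists2 y : I -> R, forall j, 0 <= y j & forall t, c t = \sum_(j <- s) y j * a j t.

Definition separating {I : eqType} (s : seq I) (a : I -> T -> R) (c x : T -> R) :=
  (forall j, j \in s -> dot (a j) x <= 0) /\ 0 < dot c x.

Lemma farkas_seq {I : eqType} (s : seq I) (a : I -> T -> R) (c : T -> R) :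
  uniq s -> in_cone s a c \/ exists x, separating s a c x.
Proof.
elim: s a c => [|j0 s IH] a c /=.
  case: (boolP [exists t, c t != 0]) => [/existsP c_neq0 | /existsPn c_eq0] _.
    by right; exists c; split=> //; apply: dot_self_gt0.
  left; exists (fun=> 0) => // t; rewrite big_nil.
  by apply/eqP; rewrite -[_ == _]negbK c_eq0.
case/andP=> j0_notin_s uniq_s.
have [[y y_ge0 c_eq]|[x [x_sep cx_gt0]]] := IH a c uniq_s.
  left; exists (fun j => if j == j0 then 0 else y j) => [j|t]; first by case: ifP.
  rewrite big_cons eqxx mul0r add0r c_eq; apply: eq_big_seq => j j_in_s.
  by case: eqP j_in_s => // ->; rewrite (negbTE j0_notin_s).
have [a0x_le0|a0x_gt0] := leP (dot (a j0) x) 0.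
  by right; exists x; split=> // j; rewrite inE => /predU1P[->|/x_sep].
(* Project every vector along [a j0] onto the hyperplane orthogonal to [x]. *)
pose al := dot (a j0) x.
pose pr v t := v t - dot v x / al * a j0 t.
have [[y y_ge0 prc_eq]|[x' [x'_sep prc_x'_gt0]]] :=
  IH (fun j => pr (a j)) (pr c) uniq_s.
- pose S := \sum_(j <- s) y j * dot (a j) x.
  have S_le0 : S <= 0.
    rewrite /S big_seq; apply: sumr_le0 => j j_in_s.
    by rewrite mulr_ge0_le0 ?x_sep.
  left; exists (fun j => if j == j0 then (dot c x - S) / al else y j) => [j|t].
    case: ifP => // _.
    by rewrite divr_ge0 ?subr_ge0 ?(ltW a0x_gt0) ?(le_trans S_le0) ?ltW.
  rewrite big_cons eqxx.
  rewrite (eq_big_seq (fun j => y j * a j t)); last first.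
    by move=> j j_in_s; case: eqP j_in_s => // ->; rewrite (negbTE j0_notin_s).
  have prc_t := prc_eq t; rewrite /pr /= in prc_t.
  have sum_pr : \sum_(j <- s) y j * (a j t - dot (a j) x / al * a j0 t) =
                \sum_(j <- s) y j * a j t - S / al * a j0 t.
    by rewrite /S !mulr_suml -sumrB; apply: eq_bigr => j _; ring.
  rewrite sum_pr in prc_t; rewrite mulrBl; lra.
- right; pose x'' t := x' t - dot (a j0) x' / al * x t.
  have dot_x'' v : dot v x'' = dot (pr v) x'.
    by rewrite dotBr dotZr [dot (pr v) x']dotC dotBr dotZr !(dotC x'); ring.
  exists x''; split; last by rewrite dot_x''.
  move=> j; rewrite inE => /predU1P[->|j_in_s]; last by rewrite dot_x'' x'_sep.
  by rewrite dotBr dotZr -/al divfK ?subrr ?gt_eqF.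
Qed.

Lemma farkas {J : finType} (a : J -> T -> R) (c : T -> R) :
  (exists2 y : J -> R, forall j, 0 <= y j & forall t, c t = \sum_j y j * a j t) \/
  exists x, (forall j, dot (a j) x <= 0) /\ 0 < dot c x.
Proof.
have [c_in_cone|[x [x_sep cx_gt0]]] := farkas_seq _ a c (index_enum_uniq J).
  by left.
by right; exists x; split=> // j; apply/x_sep/mem_index_enum.
Qed.

End Farkas.

Section LinearProgram.
Context {R : realFieldType} {T : finType}.

Lemma orthant_minimizer_coef (A x : T -> R) :
  (forall t, 0 <= x t) ->
  (forall x', (forall t, 0 <= x' t) -> dot A x <= dot A x') ->
  forall t, 0 <= A t /\ (0 < x t -> A t = 0).
Proof.
move=> x_ge0 x_min t.
have shift r : dot A (fun q => x q + r * (q == t)%:R) = dot A x + r * A t.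
  by rewrite dotDr dotZr dot_deltar.
have At_ge0 : 0 <= A t.
  have := x_min (fun q => x q + 1 * (q == t)%:R).
  by rewrite shift mul1r lerDl; apply=> q; rewrite addr_ge0 ?mul1r ?ler0n.
split=> // xt_gt0; apply/le_anti; rewrite At_ge0 andbT.
have := x_min (fun q => x q + - x t * (q == t)%:R).
rewrite shift mulNr -[X in X <= _]addr0 lerD2l oppr_ge0 pmulr_rle0 //; apply=> q.
by case: eqP => [->|_]; rewrite ?mulr1 ?mulr0 ?addr0 ?addrN.
Qed.

Definition lp_feasible {J : finType} (a : J -> T -> R) (e : J -> R) x :=
  forall j, dot (a j) x <= e j.

Context {J : finType} {a : J -> T -> R} {e : J -> R} {c : T -> R}.

(* Farkas for the homogenized system [dot (a j) z <= e j * s], [0 <= s],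
   against the objective [dot c x * s - dot c z]. *)
Lemma lp_optimal_lagrange_bound x :
  lp_feasible a e x -> (forall x', lp_feasible a e x' -> dot c x <= dot c x') ->
  exists2 y : J -> R, forall j, 0 <= y j &
    forall x', dot c x <= dot c x' + \sum_j y j * (dot (a j) x' - e j).
Proof.
move=> x_feas x_opt.
pose a' (j : J + unit) :=
  if j is inl j then homog (a j) (- e j) else homog (fun=> 0) (-1).
pose c' := homog (fun t => - c t) (dot c x).
have [[y y_ge0 c'_eq]|[z' [z'_sep c'z'_gt0]]] := farkas a' c'.
  exists (fun j => y (inl j)) => [j|x']; first exact: y_ge0.
  have := dot_sumlE (homog x' 1) c'_eq.
  rewrite big_sumType (big_pred1 tt) //= !dot_homog dot0l dotNl.
  under eq_bigr do rewrite dot_homog mulr1.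
  have := y_ge0 (inr tt); lra.
exfalso; pose z t := z' (inl t); pose s := z' (inr tt).
have z_sep j : dot (a j) z <= e j * s.
  by have := z'_sep (inl j); rewrite dot_homogl mulNr subr_le0.
have s_ge0 : 0 <= s.
  by have := z'_sep (inr tt); rewrite dot_homogl dot0l add0r mulN1r oppr_le0.
have cz_lt : dot c z < dot c x * s.
  by move: c'z'_gt0; rewrite dot_homogl dotNl addrC subr_gt0.
have s1_gt0 : 0 < s + 1 by rewrite ltr_wpDl.
(* For s > 0, x' is a convex combination of x and the feasible point z / s;
   for s = 0, it is x moved along the improving recession direction z.
   Either way x' is feasible and strictly better than x. *)
pose x' t := (s + 1)^-1 * (z t + x t).
have dot_x' u : dot u x' = (dot u z + dot u x) / (s + 1).
  by rewrite dotZr dotDr mulrC.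
have x'_feas : lp_feasible a e x'.
  move=> j; rewrite dot_x' ler_pdivrMr //.
  by have := z_sep j; have := x_feas j; lra.
by have := x_opt x' x'_feas; rewrite dot_x' ler_pdivlMr //; lra.
Qed.

End LinearProgram.

Section PowerAllocation.
Context {R : realType} {L K : nat} {c b : 'I_L -> 'I_K -> R}.
Context {sigDL2 : R} {Pmax : 'I_L -> R}.
Implicit Types (rho : 'I_L -> 'I_K -> R) (x : 'I_L * 'I_K -> R).
Implicit Types (lam : 'I_K -> R) (mu : 'I_L -> R).

Definition flat rho (p : 'I_L * 'I_K) : R := rho p.1 p.2.
Definition unflat x (i : 'I_L) (t : 'I_K) : R := x (i, t).

Lemma dot_flat_unflat u x : dot u (flat (unflat x)) = dot u x.
Proof. by apply: eq_bigr => -[]. Qed.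

Lemma dot_flat u rho : dot u (flat rho) = \sum_i \sum_t u (i, t) * rho i t.
Proof. by rewrite pair_bigA; apply: eq_bigr => -[]. Qed.

Definition se_row k (p : 'I_L * 'I_K) : R := c p.1 k - (p.2 == k)%:R * b p.1 k.
Definition pow_row i (p : 'I_L * 'I_K) : R := (p.1 == i)%:R.

Lemma objective_flat rho : objective rho = dot (fun=> 1) (flat rho).
Proof.
rewrite dot_flat exchange_big; apply: eq_bigr => t _.
by apply: eq_bigr => i _; rewrite mul1r.
Qed.

Lemma se_constr_flat rho k :
  se_constr c b sigDL2 rho k = dot (se_row k) (flat rho) + sigDL2.
Proof.
rewrite dot_flat /se_constr exchange_big /= -sumrB; congr (_ + _).
apply: eq_bigr => i _; rewrite /se_row /=.
by under [RHS]eq_bigr do rewrite mulrBl -mulrA; rewrite sumrB sum_delta.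
Qed.

Lemma pow_constr_flat rho i :
  pow_constr Pmax rho i = dot (pow_row i) (flat rho) - Pmax i.
Proof.
rewrite dot_flat /pow_constr /pow_row /=.
by under [in RHS]eq_bigr do rewrite -mulr_sumr; rewrite sum_delta.
Qed.

Local Notation constraint := ('I_L * 'I_K + 'I_K + 'I_L)%type.

Definition constr_row (j : constraint) : 'I_L * 'I_K -> R :=
  match j with
  | inl (inl q) => fun p => - (p == q)%:R
  | inl (inr k) => se_row k
  | inr i => pow_row i
  end.

Definition constr_bound (j : constraint) : R :=
  match j with inl (inl _) => 0 | inl (inr _) => - sigDL2 | inr i => Pmax i end.

Definition constr_val rho (j : constraint) : R :=
  match j with
  | inl (inl q) => - rho q.1 q.2
  | inl (inr k) => se_constr c b sigDL2 rho k
  | inr i => pow_constr Pmax rho i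
  end.

Lemma constr_flat rho j :
  dot (constr_row j) (flat rho) - constr_bound j = constr_val rho j.
Proof.
case: j => [[q|k]|i] /=.
- by rewrite dotNl subr0 dotC dot_deltar.
- by rewrite se_constr_flat opprK.
- by rewrite pow_constr_flat.
Qed.

Lemma feasible_flat rho :
  feasible c b sigDL2 Pmax rho <-> lp_feasible constr_row constr_bound (flat rho).
Proof.
split=> [[rho_ge0 se_le0 pow_le0] j|rho_feas].
  rewrite -subr_le0 constr_flat; case: j => [[q|k]|i] /=.
  - by rewrite oppr_le0.
  - exact: se_le0.
  - exact: pow_le0.
have {}rho_feas j : constr_val rho j <= 0 by rewrite -constr_flat subr_le0.
split=> [i t|k|i].
- by rewrite -oppr_le0; apply: (rho_feas (inl (inl (i, t)))).
- exact: (rho_feas (inl (inr k))).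
- exact: (rho_feas (inr i)).
Qed.

Lemma optimal_dual_lb rho : optimal c b sigDL2 Pmax rho ->
  exists lam mu, [/\ forall k, 0 <= lam k, forall i, 0 <= mu i &
                      dual_lb c b sigDL2 Pmax lam mu (objective rho)].
Proof.
case=> /feasible_flat rho_feas rho_opt.
have [x x_feas|y y_ge0 y_bound] :=
  lp_optimal_lagrange_bound (c := fun=> 1) _ rho_feas.
  rewrite -objective_flat -dot_flat_unflat -objective_flat.
  apply/rho_opt/feasible_flat.
  by move=> j; rewrite dot_flat_unflat.
exists (fun k => y (inl (inr k))), (fun i => y (inr i)).
split=> // rho' rho'_ge0; have := y_bound (flat rho').
rewrite -!objective_flat; under eq_bigr do rewrite constr_flat.
rewrite !big_sumType /= /lagrangian.
have : \sum_q y (inl (inl q)) * - rho' q.1 q.2 <= 0.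
  by apply: sumr_le0 => q _; rewrite mulr_ge0_le0 ?oppr_le0.
lra.
Qed.

Lemma lagrangian_le_objective rho lam mu : feasible c b sigDL2 Pmax rho ->
  (forall k, 0 <= lam k) -> (forall i, 0 <= mu i) ->
  lagrangian c b sigDL2 Pmax rho lam mu <= objective rho.
Proof.
case=> _ se_le0 pow_le0 lam_ge0 mu_ge0.
have : \sum_k lam k * se_constr c b sigDL2 rho k <= 0.
  by apply: sumr_le0 => k _; rewrite mulr_ge0_le0.
have : \sum_i mu i * pow_constr Pmax rho i <= 0.
  by apply: sumr_le0 => i _; rewrite mulr_ge0_le0.
rewrite /lagrangian; lra.
Qed.

Definition reduced_cost lam mu (p : 'I_L * 'I_K) : R :=
  1 + \sum_k lam k * se_row k p + \sum_i mu i * pow_row i p.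

Lemma reduced_costE lam mu i t :
  reduced_cost lam mu (i, t) = 1 + \sum_k lam k * c i k + mu i - lam t * b i t.
Proof.
rewrite /reduced_cost /se_row /pow_row /=.
under eq_bigr do rewrite mulrBr mulrCA eq_sym.
under [X in _ + X]eq_bigr do rewrite mulrC eq_sym.
by rewrite sumrB !sum_delta; ring.
Qed.

Lemma lagrangian_flat rho lam mu :
  lagrangian c b sigDL2 Pmax rho lam mu =
  dot (reduced_cost lam mu) (flat rho) +
  (\sum_k lam k * sigDL2 - \sum_i mu i * Pmax i).
Proof.
rewrite /lagrangian /reduced_cost objective_flat [in RHS]dotC !dotDr.
rewrite !(dotC (flat rho)) !dot_suml.
under eq_bigr do rewrite se_constr_flat mulrDr.
under [X in _ + X = _]eq_bigr do rewrite pow_constr_flat mulrBr.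
by rewrite !big_split sumrN /=; ring.
Qed.

Lemma serving_costE lam mu i t : b i t != 0 ->
  serving_cost c b lam mu i t = lam t + reduced_cost lam mu (i, t) / b i t.
Proof. by move=> bit_neq0; rewrite reduced_costE /serving_cost; field. Qed.

Lemma optimal_reduced_cost rho lam mu :
  optimal c b sigDL2 Pmax rho -> dual_optimal c b sigDL2 Pmax lam mu ->
  forall i t, 0 <= reduced_cost lam mu (i, t) /\
              (0 < rho i t -> reduced_cost lam mu (i, t) = 0).
Proof.
move=> rho_opt [lam_ge0 mu_ge0 dual_max] i t.
have [lam' [mu' [lam'_ge0 mu'_ge0 /(dual_max _ _ lam'_ge0 mu'_ge0) lb]]] :=
  optimal_dual_lb rho rho_opt.
have [[rho_ge0 _ _] _] := rho_opt.
have := lagrangian_le_objective rho lam mu rho_opt.1 lam_ge0 mu_ge0.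
rewrite lagrangian_flat => L_le.
apply: (orthant_minimizer_coef _ (flat rho)) (i, t) => [[i' t']|x x_ge0].
  exact: rho_ge0.
have := lb (unflat x) (fun i t => x_ge0 (i, t)).
rewrite lagrangian_flat dot_flat_unflat; lra.
Qed.

End PowerAllocation.

Lemma xihat_gt0 (R : realType) (K : nat) (tau_c tau_p : R) (xi : 'I_K -> R) k :
  0 <= tau_p -> tau_p < tau_c -> 0 < xi k -> 0 < xihat tau_c tau_p xi k.
Proof.
move=> tp_ge0 tp_lt_tc xi_gt0.
have two_gt1 : (1 : R) < 2 by rewrite ltr1n.
have exponent_gt0 : 0 < xi k * tau_c / (tau_c - tau_p).
  by rewrite divr_gt0 ?mulr_gt0 ?subr_gt0 // (le_lt_trans tp_ge0 tp_lt_tc).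
rewrite /xihat subr_gt0 /powR gt_eqF ?(lt_trans ltr01 two_gt1) //.
by rewrite expR_gt1 mulr_gt0 ?ln_gt0.
Qed.

Lemma bcoef_gt0 (R : realType) (L K M : nat) (tau_c tau_p sigUL2 : R)
    (p : 'I_K -> R) (beta : 'I_L -> 'I_K -> R) (xi : 'I_K -> R) i t :
  (0 < M)%N -> 0 < tau_p -> tau_p < tau_c -> 0 < sigUL2 ->
  0 < p t -> 0 < beta i t -> 0 < xi t ->
  0 < bcoef M tau_c tau_p sigUL2 p beta xi i t.
Proof.
move=> M_gt0 tp_gt0 tp_lt_tc UL_gt0 pt_gt0 beta_gt0 xi_gt0.
rewrite /bcoef divr_gt0 ?mulr_gt0 ?ltr0n ?exprn_gt0 //.
  by apply: xihat_gt0 => //; apply: ltW.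
by rewrite addr_gt0 ?mulr_gt0.
Qed.

Theorem theorem3 (R : realType) (L K M : nat)
  (tau_p tau_c sigUL2 sigDL2 : R) (beta : 'I_L -> 'I_K -> R) (p xi : 'I_K -> R)
  (Pmax : 'I_L -> R)
  (hL : (0 < L)%N) (hK : (0 < K)%N) (hM : (0 < M)%N)
  (htp : 0 < tau_p) (htc : tau_p < tau_c)
  (hbeta : forall i k, 0 < beta i k) (hp : forall k, 0 < p k)
  (hUL : 0 < sigUL2) (hDL : 0 < sigDL2) (hP : forall i, 0 < Pmax i)
  (hxi : forall k, 0 < xi k)
  (rho : 'I_L -> 'I_K -> R) (lam : 'I_K -> R) (mu : 'I_L -> R) :
  let c := ccoef beta in
  let b := bcoef M tau_c tau_p sigUL2 p beta xi in
  (exists rho0, feasible c b sigDL2 Pmax rho0) ->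
  optimal c b sigDL2 Pmax rho ->
  dual_optimal c b sigDL2 Pmax lam mu ->
  forall (t : 'I_K) (i : 'I_L), 0 < rho i t -> i \in Sset c b lam mu t.
Proof.
(* Feasibility of the program is already implied by the optimal [rho]. *)
move=> c b _ rho_opt lam_mu_opt t i rho_it_gt0.
have b_gt0 j : 0 < b j t by apply: bcoef_gt0.
have KKT := optimal_reduced_cost rho lam mu rho_opt lam_mu_opt.
rewrite inE; apply/forallP => j.
rewrite !serving_costE ?gt_eqF // (KKT i t).2 // mul0r addr0 lerDl.
by rewrite divr_ge0 ?(KKT j t).1 ?ltW.
Qed.
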